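(* (Advantage of the fewer.) Fix $M$, $p$, $q$, $\mu$ as in the context, take attention bias $\alpha=1$ and a preference for like-minded news $\gamma$ with $0<\gamma<1$, and use the limit interim efficiencies $\mathcal P_L$ defined in the context (uniform initial ranking, $N,\kappa\to\infty$). For $j\in\{0,1,\dots,M\}$ let $$Q^{\mathrm{corr}}(j)=\mathcal P_j,\qquad Q^{\mathrm{inc}}(j)=1-\mathcal P_{M-j},$$ which are, respectively, the limit total probability that a searcher clicks on one of the websites in a set $J$ of $j$ websites all carrying the correct signal, or all carrying the incorrect signal (the remaining $M-j$ websites carrying the other signal). Then for every $j\in\{1,2,\dots,M-2\}$ with $j\neq \frac{M-1}{2}$, $$Q^{\mathrm{corr}}(j+1)\le Q^{\mathrm{corr}}(j)\quad\text{and}\quad Q^{\mathrm{inc}}(j+1)\le Q^{\mathrm{inc}}(j),$$ i.e. the limit total clicking probability on all websites carrying a fixed signal is (weakly) decreasing in the number $\#J$ of such websites whenever $\#J\notin\{0,\frac{M-1}{2},M-1\}$.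
   Context: Model. There are $M$ websites ($M\ge 3$ odd) and a binary state $\omega$. Each website carries a fixed signal $y_m\in\{0,1\}$; $L\in\{0,\dots,M\}$ denotes the number of websites whose signal is correct ($y_m=\omega$). The set of websites carrying the signal held by a strict majority of websites is $K$. Parameters: $p\in(\tfrac12,1)$ (accuracy of a searcher's private signal $x_n$ about $\omega$), $q\in(\tfrac12,1)$ (accuracy of each website's signal), $\mu\in(\tfrac12,1]$ (accuracy of a searcher's signal $z_n$ about the website-majority signal), with $\mu q>p$; $\gamma\in[0,1]$ (preference for like-minded news); $\alpha\ge 0$ (attention bias; the baseline model has $\alpha=1$). Searchers arrive one at a time; a searcher with signals $(x_n,z_n)$ facing ranking $r\in\Delta(M)$ clicks website $m$ with probability $\rho_m=r_m^\alpha v^*_m/\sum_{m'}r_{m'}^\alpha v^*_{m'}$, where $v^*_m$ equals $1/[m]$ if $y_m=x_n=z_n$, $\gamma/[m]$ if $y_m=x_n\ne z_n$, $(1-\gamma)/[m]$ if $y_m=z_n\neq x_n$, and $0$ otherwise, with $[m]$ the number of websites carrying the same signal as $m$. The popularity ranking is updated by $r_{t,m}=\frac{\kappa}{\kappa+1}r_{t-1,m}+\frac{1}{\kappa+1}\rho_{t-1,m}$. Reduced limit dynamics (operative definitions). Call $L$ a minority if $1\le L\le\frac{M-1}{2}$ and a majority if $\frac{M+1}{2}\le L\le M-1$. Writing $u=(x/L)^\alpha$, $w=((1-x)/(M-L))^\alpha$, define for $x\in[0,1]$ $$\theta_L(x)=p(1-\mu)+\frac{p\mu\gamma u}{\gamma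 u+(1-\gamma)w}+\frac{(1-p)(1-\mu)(1-\gamma)u}{(1-\gamma)u+\gamma w}\quad\text{($L$ minority)},$$ $$\theta_L(x)=p\mu+\frac{p(1-\mu)\gamma u}{\gamma u+(1-\gamma)w}+\frac{(1-p)\mu(1-\gamma)u}{(1-\gamma)u+\gamma w}\quad\text{($L$ majority)}.$$ $\theta_L(x)$ is the expected total probability that a searcher clicks a correct-signal website when the total ranking mass on the $L$ correct-signal websites is $x$, spread evenly among them. The limit interim efficiency (limit probability, as the number of searchers $N$ and persistence $\kappa$ go to infinity, in the mean-dynamics approximation, that a searcher clicks a correct-signal website, starting from the uniform initial ranking) is $\mathcal P_L=\lim_{t\to\infty}X(t)$, where $X$ solves $\dot X=\theta_L(X)-X$, $X(0)=L/M$; and $\mathcal P_0=0$, $\mathcal P_M=1$. Note $\theta_L(\mathcal P_L)=\mathcal P_L$ for $1\le L\le M-1$. *)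

From Stdlib Require Import Reals Lra.
Open Scope R_scope.

(* theta_L(x) with attention bias alpha = 1:
   u = x / L, w = (1 - x) / (M - L). *)
Definition theta1 (M L : nat) (p mu gamma x : R) : R :=
  let u := x / INR L in
  let w := (1 - x) / (INR M - INR L) in
  if (2 * L <=? M - 1)%nat then
    (* L minority *)
    p * (1 - mu)
    + p * mu * gamma * u / (gamma * u + (1 - gamma) * w)
    + (1 - p) * (1 - mu) * (1 - gamma) * u / ((1 - gamma) * u + gamma * w)
  else
    (* L majority *)
    p * mu
    + p * (1 - mu) * gamma * u / (gamma * u + (1 - gamma) * w)
    + (1 - p) * mu * (1 - gamma) * u / ((1 - gamma) * u + gamma * w).

Definition solves_limit_ode (M L : nat) (p mu gamma : R) (X : R -> R) : Prop :=
  X 0 = INR L / INR M /\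
  (forall eps, 0 < eps -> exists delta, 0 < delta /\
     forall t, 0 <= t < delta -> Rabs (X t - X 0) < eps) /\
  (forall t, 0 < t -> derivable_pt_lim X t (theta1 M L p mu gamma (X t) - X t)).

Definition tends_at_infty (f : R -> R) (l : R) : Prop :=
  forall eps, 0 < eps -> exists T, forall t, T <= t -> Rabs (f t - l) < eps.

Definition is_limit_efficiency (M : nat) (p mu gamma : R) (P : nat -> R) : Prop :=
  P 0%nat = 0 /\ P M = 1 /\
  forall L, (1 <= L <= M - 1)%nat ->
    exists X : R -> R, solves_limit_ode M L p mu gamma X /\ tends_at_infty X (P L).

Definition Qcorr (P : nat -> R) (j : nat) : R := P j.
Definition Qinc (M : nat) (P : nat -> R) (j : nat) : R := 1 - P (M - j)%nat.

(* With attention bias 1, theta_L is a nonnegative combination of a constant and of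
   click shares [share A B x = A x / (A x + B (1 - x))], which see [x] only through its
   odds.  Within one regime (minority or majority), passing from L to L + 1 correct sites
   rescales all these odds by the same factor, so theta_L = theta_(L+1) o h for the
   increasing map h = share ((L+1)/L) ((M-L-1)/(M-L)), which sends L/M to (L+1)/M and
   moves every interior point up.  The mean dynamics X' = theta_L(X) - X is a scalar
   autonomous ODE: its limit P_L is a fixed point of theta_L, and theta_L(x) - x points
   towards P_L all the way from L/M.  Comparing the two fixed points through h gives
   P_(L+1) <= P_L; applied at M - j - 1 it gives the claim for Q^inc. *)

From Stdlib Require Import Reals Arith Lra Lia FunctionalExtensionality.
Open Scope R_scope.

Lemma continuity_pt_eps f x : continuity_pt f x -> forall eps, 0 < eps ->
  exists del, 0 < del /\ forall y, Rabs (y - x) < del -> Rabs (f y - f x) < eps.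
Proof.
  intros Hf eps Heps. destruct (Hf eps Heps) as [del [Hdel Hy]].
  exists del; split; [lra|]. intros y Hyx. destruct (Req_dec y x) as [->|Hne].
  - rewrite Rminus_diag, Rabs_R0; lra.
  - apply Hy. split; [split; [exact I | auto] | exact Hyx].
Qed.

Definition right_continuous_at (f : R -> R) (t : R) : Prop :=
  forall eps, 0 < eps -> exists del, 0 < del /\
    forall s, t <= s < t + del -> Rabs (f s - f t) < eps.

Lemma continuity_pt_right_continuous f t : continuity_pt f t -> right_continuous_at f t.
Proof.
  intros Hf eps Heps. destruct (continuity_pt_eps f t Hf eps Heps) as [del [Hdel Hy]].
  exists del; split; [exact Hdel|]. intros s Hs. apply Hy. rewrite Rabs_right; lra.
Qed.

Lemma derivable_pt_lim_exp_weight X t d K c : derivable_pt_lim X t d ->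
  derivable_pt_lim (fun s => (X s - c) * exp (- K * s)) t
    ((d - K * (X t - c)) * exp (- K * t)).
Proof.
  intros HX.
  pose proof (derivable_pt_lim_minus X (fct_cte c) t d 0 HX (derivable_pt_lim_const c t)) as HXc.
  assert (Hlin : derivable_pt_lim (mult_real_fct (- K) id) t (- K * 1)).
  { apply derivable_pt_lim_scal, derivable_pt_lim_id. }
  pose proof (derivable_pt_lim_comp _ _ t _ _ Hlin (derivable_pt_lim_exp _)) as Hexp.
  pose proof (derivable_pt_lim_mult _ _ t _ _ HXc Hexp) as Hprod.
  replace ((d - K * (X t - c)) * exp (- K * t)) with
    ((d - 0) * comp exp (mult_real_fct (- K) id) t +
     (X - fct_cte c)%F t * (exp (mult_real_fct (- K) id t) * (- K * 1)));
    [exact Hprod|].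
  unfold comp, mult_real_fct, id, minus_fct, fct_cte. ring.
Qed.

Lemma derivable_pt_lim_upper_linear f c l : derivable_pt_lim f c l -> f c <= 0 ->
  exists del K, 0 < del /\ 0 <= K /\ forall x, c < x < c + del -> f x <= K * (x - c).
Proof.
  intros Hf Hc. destruct (Hf 1 Rlt_0_1) as [del Hdel].
  exists del, (Rabs l + 1). split; [apply cond_pos|]. split; [pose proof (Rabs_pos l); lra|].
  intros x Hx. assert (Hh : x - c <> 0) by lra.
  pose proof (Hdel (x - c) Hh ltac:(rewrite Rabs_right; lra)) as Hq.
  replace (c + (x - c)) with x in Hq by ring.
  apply Rabs_def2 in Hq. destruct Hq as [Hq _]. pose proof (Rle_abs l).
  assert (Hdiff : f x - f c < (l + 1) * (x - c)).
  { assert (Hq' : (f x - f c) / (x - c) < l + 1) by lra.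
    apply (Rmult_lt_compat_r (x - c)) in Hq'; [|lra].
    replace ((f x - f c) / (x - c) * (x - c)) with (f x - f c) in Hq' by (field; lra). lra. }
  nra.
Qed.

Section AutonomousODE.

Variables f X : R -> R.
Hypothesis X_right_continuous_0 : right_continuous_at X 0.
Hypothesis X_derivative : forall t, 0 < t -> derivable_pt_lim X t (f (X t)).

Lemma ode_continuity_pt t : 0 < t -> continuity_pt X t.
Proof.
  intros Ht. apply derivable_continuous_pt. exists (f (X t)). exact (X_derivative t Ht).
Qed.

Lemma ode_right_continuous t : 0 <= t -> right_continuous_at X t.
Proof.
  intros Ht. destruct (Req_dec t 0) as [->|Hne]; [exact X_right_continuous_0|].
  apply continuity_pt_right_continuous, ode_continuity_pt. lra.
Qed.

Lemma ode_last_time_below c t1 : 0 <= t1 -> X 0 <= c -> c < X t1 ->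
  exists sg, 0 <= sg < t1 /\ X sg <= c /\ forall t, sg < t <= t1 -> c < X t.
Proof.
  intros Ht1 H0 H1.
  set (E := fun t => 0 <= t <= t1 /\ X t <= c).
  assert (HE : bound E) by (exists t1; intros x [Hx _]; lra).
  assert (HE0 : E 0) by (split; lra).
  destruct (completeness E HE (ex_intro _ 0 HE0)) as [sg [Hub Hlub]].
  assert (Hsg0 : 0 <= sg) by (apply Hub; split; lra).
  assert (Hsg1 : sg <= t1) by (apply Hlub; intros x [Hx _]; lra).
  assert (Hsg : X sg <= c).
  { destruct (Rle_or_lt (X sg) c) as [|Hc]; [assumption|exfalso].
    destruct (Req_dec sg 0) as [Hz|Hz]; [rewrite Hz in Hc; lra|].
    destruct (continuity_pt_eps X sg (ode_continuity_pt sg ltac:(lra)) (X sg - c))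
      as [e [He Hy]]; [lra|].
    enough (is_upper_bound E (sg - e / 2)) by (specialize (Hlub _ H); lra).
    intros x [Hx HXx]. destruct (Rle_or_lt x (sg - e / 2)) as [|Hxe]; [assumption|].
    assert (x <= sg) by (apply Hub; split; assumption).
    assert (Hd : Rabs (X x - X sg) < X sg - c) by (apply Hy; rewrite Rabs_left1; lra).
    apply Rabs_def2 in Hd. lra. }
  exists sg. split; [split; [assumption|]|split; [assumption|]].
  - destruct (Req_dec sg t1) as [Heq|]; [rewrite Heq in Hsg; lra|lra].
  - intros t Ht. destruct (Rle_or_lt (X t) c) as [Hle|]; [|assumption].
    assert (t <= sg) by (apply Hub; split; [lra|assumption]). lra.
Qed.

Lemma ode_barrier c del K : X 0 <= c -> 0 < del -> 0 <= K ->
  (forall x, c < x < c + del -> f x <= K * (x - c)) ->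
  forall t, 0 <= t -> X t <= c.
Proof.
  intros H0 Hdel HK Hf t1 Ht1.
  destruct (Rle_or_lt (X t1) c) as [|Hgt]; [assumption|exfalso].
  destruct (ode_last_time_below c t1 Ht1 H0 Hgt) as [sg [[Hsg0 Hsg1] [Hsg Habove]]].
  destruct (ode_right_continuous sg Hsg0 del Hdel) as [e1 [He1 Hnear]].
  set (tau := Rmin (sg + e1 / 2) t1).
  assert (Htau : sg < tau <= t1 /\ tau <= sg + e1 / 2).
  { unfold tau. split; [split; [apply Rmin_glb_lt; lra | apply Rmin_r] | apply Rmin_l]. }
  assert (Hband : forall t, sg < t <= tau -> c < X t < c + del).
  { intros t Ht. split; [apply Habove; lra|].
    assert (Hd : Rabs (X t - X sg) < del) by (apply Hnear; lra).
    apply Rabs_def2 in Hd. lra. }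
  (* The weight exp(-K t) turns the linear bound into [Z' <= 0] inside the band. *)
  set (Z := fun s => (X s - c) * exp (- K * s)).
  assert (HZtau : 0 < Z tau).
  { apply Rmult_lt_0_compat; [|apply exp_pos]. assert (c < X tau) by (apply Habove; lra). lra. }
  assert (HZdecr : forall s, sg < s < tau -> Z tau <= Z s).
  { intros s Hs.
    destruct (MVT_cor2 Z (fun t => (f (X t) - K * (X t - c)) * exp (- K * t)) s tau)
      as [xi [Heq Hxi]]; [lra| intros; apply derivable_pt_lim_exp_weight, X_derivative; lra |].
    assert (f (X xi) <= K * (X xi - c)) by (apply Hf, Hband; lra).
    pose proof (exp_pos (- K * xi)).
    assert ((f (X xi) - K * (X xi - c)) * exp (- K * xi) <= 0) by nra.
    nra. }
  destruct (ode_right_continuous sg Hsg0 (Z tau) HZtau) as [e2 [He2 Hnear2]].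
  set (s := sg + Rmin e2 (tau - sg) / 2).
  assert (Hs : sg < s < tau /\ s < sg + e2).
  { unfold s. pose proof (Rmin_l e2 (tau - sg)). pose proof (Rmin_r e2 (tau - sg)).
    assert (0 < Rmin e2 (tau - sg)) by (apply Rmin_glb_lt; lra). lra. }
  assert (HXs : c < X s) by (apply Habove; lra).
  assert (HXs' : X s - c < Z tau).
  { assert (Hd : Rabs (X s - X sg) < Z tau) by (apply Hnear2; lra). apply Rabs_def2 in Hd. lra. }
  assert (Hexp : exp (- K * s) <= 1).
  { rewrite <- exp_0. destruct (Req_dec K 0) as [->|HK0].
    - replace (- 0 * s) with 0 by ring. lra.
    - left. apply exp_increasing. nra. }
  assert (Z s <= X s - c) by (unfold Z; pose proof (exp_pos (- K * s)); nra).
  specialize (HZdecr s ltac:(lra)). lra.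
Qed.

End AutonomousODE.

Lemma ode_stays_below f X c l : right_continuous_at X 0 ->
  (forall t, 0 < t -> derivable_pt_lim X t (f (X t))) ->
  X 0 <= c -> f c <= 0 -> derivable_pt_lim f c l ->
  forall t, 0 <= t -> X t <= c.
Proof.
  intros HX0 HX Hc Hfc Hl.
  destruct (derivable_pt_lim_upper_linear f c l Hl Hfc) as [del [K [Hdel [HK Hlin]]]].
  exact (ode_barrier f X HX0 HX c del K Hc Hdel HK Hlin).
Qed.

Lemma ode_stays_above f X c l : right_continuous_at X 0 ->
  (forall t, 0 < t -> derivable_pt_lim X t (f (X t))) ->
  c <= X 0 -> 0 <= f c -> derivable_pt_lim f c l ->
  forall t, 0 <= t -> c <= X t.
Proof.
  intros HX0 HX Hc Hfc Hl t Ht.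
  enough (- X t <= - c) by lra.
  apply (ode_stays_below (fun y => - f (- y)) (fun t => - X t) (- c) (- (l * -1))); auto.
  - intros eps Heps. destruct (HX0 eps Heps) as [del [Hdel Hnear]].
    exists del; split; [exact Hdel|]. intros s Hs.
    replace (- X s - - X 0) with (- (X s - X 0)) by ring. rewrite Rabs_Ropp. auto.
  - intros u Hu. rewrite Ropp_involutive. exact (derivable_pt_lim_opp X u _ (HX u Hu)).
  - lra.
  - rewrite Ropp_involutive. lra.
  - apply (derivable_pt_lim_opp (comp f (- id)%F)), derivable_pt_lim_comp.
    + apply derivable_pt_lim_opp, derivable_pt_lim_id.
    + unfold opp_fct, id. rewrite Ropp_involutive. exact Hl.
Qed.

Lemma tends_at_infty_le X s c : tends_at_infty X s ->
  (forall t, 0 <= t -> X t <= c) -> s <= c.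
Proof.
  intros Hlim Hb. destruct (Rle_or_lt s c) as [|Hsc]; [assumption|exfalso].
  destruct (Hlim (s - c)) as [T HT]; [lra|].
  specialize (HT (Rmax T 0) (Rmax_l _ _)). specialize (Hb (Rmax T 0) (Rmax_r _ _)).
  apply Rabs_def2 in HT. lra.
Qed.

Lemma tends_at_infty_ge X s c : tends_at_infty X s ->
  (forall t, 0 <= t -> c <= X t) -> c <= s.
Proof.
  intros Hlim Hb. destruct (Rle_or_lt c s) as [|Hsc]; [assumption|exfalso].
  destruct (Hlim (c - s)) as [T HT]; [lra|].
  specialize (HT (Rmax T 0) (Rmax_l _ _)). specialize (Hb (Rmax T 0) (Rmax_r _ _)).
  apply Rabs_def2 in HT. lra.
Qed.

(* If [f s] were nonzero, [X' = f X] would stay bounded away from 0 near the limit,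
   and [X] would drift by more than the limit allows. *)
Lemma ode_limit_equilibrium f X s : tends_at_infty X s ->
  (forall t, 0 < t -> derivable_pt_lim X t (f (X t))) ->
  continuity_pt f s -> f s = 0.
Proof.
  intros Hlim HX Hf. destruct (Req_dec (f s) 0) as [|Hne]; [assumption|exfalso].
  set (e := Rabs (f s)). assert (He : 0 < e) by (apply Rabs_pos_lt; auto).
  destruct (continuity_pt_eps f s Hf (e / 2)) as [eta [Heta Hnear]]; [lra|].
  destruct (Hlim (Rmin eta 1)) as [T HT]; [apply Rmin_glb_lt; lra|].
  pose proof (Rmin_l eta 1). pose proof (Rmin_r eta 1).
  set (t0 := Rmax T 1). set (t2 := t0 + 4 / e).
  assert (Ht0 : T <= t0 /\ 1 <= t0) by (split; [apply Rmax_l | apply Rmax_r]).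
  assert (H4e : 0 < 4 / e) by (apply Rdiv_lt_0_compat; lra).
  destruct (MVT_cor2 X (fun t => f (X t)) t0 t2) as [xi [Heq Hxi]];
    [unfold t2; lra | intros x Hx; apply HX; lra |].
  assert (A0 := HT t0 ltac:(lra)). assert (A2 := HT t2 ltac:(unfold t2; lra)).
  assert (Ax := HT xi ltac:(lra)).
  assert (Hfx : Rabs (f (X xi) - f s) < e / 2) by (apply Hnear; lra).
  assert (Hbig : e / 2 < Rabs (f (X xi))).
  { pose proof (Rabs_triang_inv (f s) (f (X xi))).
    rewrite <- Rabs_Ropp in Hfx. replace (- (f (X xi) - f s)) with (f s - f (X xi)) in Hfx by ring.
    unfold e in *. lra. }
  assert (Hdrift : Rabs (X t2 - X t0) < 2).
  { apply Rabs_def2 in A0. apply Rabs_def2 in A2. apply Rabs_def1; lra. }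
  rewrite Heq, Rabs_mult, (Rabs_right (t2 - t0)) in Hdrift by (unfold t2; lra).
  replace (t2 - t0) with (4 / e) in Hdrift by (unfold t2; ring).
  assert (e / 2 * (4 / e) = 2) by (field; lra).
  assert (e / 2 * (4 / e) < Rabs (f (X xi)) * (4 / e)) by (apply Rmult_lt_compat_r; lra).
  lra.
Qed.

(* What the trajectory of [X' = f X] from [a] tells about its limit [s] in [[0, 1]]:
   [s] is an equilibrium, and [f] does not point away from [s] between [a] and [s]. *)
Definition reaches_equilibrium (f : R -> R) (a s : R) : Prop :=
  0 <= s <= 1 /\ f s = 0 /\
  (forall c, a <= c < s -> 0 <= f c) /\ (forall c, s < c <= a -> f c <= 0).

Lemma ode_reaches_equilibrium f X s : right_continuous_at X 0 ->
  (forall t, 0 < t -> derivable_pt_lim X t (f (X t))) ->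
  (forall x, 0 <= x <= 1 -> derivable_pt f x) ->
  0 <= X 0 <= 1 -> 0 <= f 0 -> f 1 <= 0 ->
  tends_at_infty X s -> reaches_equilibrium f (X 0) s.
Proof.
  intros HX0 HX Hf HXa Hf0 Hf1 Hlim.
  assert (Hder : forall x, 0 <= x <= 1 -> exists l, derivable_pt_lim f x l)
    by (intros x Hx; exists (proj1_sig (Hf x Hx)); exact (proj2_sig (Hf x Hx))).
  assert (Hs1 : s <= 1).
  { destruct (Hder 1) as [l Hl]; [lra|].
    apply (tends_at_infty_le X s 1 Hlim), (ode_stays_below f X 1 l); auto; lra. }
  assert (Hs0 : 0 <= s).
  { destruct (Hder 0) as [l Hl]; [lra|].
    apply (tends_at_infty_ge X s 0 Hlim), (ode_stays_above f X 0 l); auto; lra. }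
  split; [lra|]. split.
  { apply (ode_limit_equilibrium f X s Hlim HX), derivable_continuous_pt, Hf. lra. }
  split.
  - intros c Hc. destruct (Rle_or_lt 0 (f c)) as [|Hfc]; [assumption|exfalso].
    destruct (Hder c) as [l Hl]; [lra|].
    assert (s <= c); [|lra].
    apply (tends_at_infty_le X s c Hlim), (ode_stays_below f X c l); auto; lra.
  - intros c Hc. destruct (Rle_or_lt (f c) 0) as [|Hfc]; [assumption|exfalso].
    destruct (Hder c) as [l Hl]; [lra|].
    assert (c <= s); [|lra].
    apply (tends_at_infty_ge X s c Hlim), (ode_stays_above f X c l); auto; lra.
Qed.

Definition share (A B x : R) : R := A * x / (A * x + B * (1 - x)).

Section Share.

Variables A B : R.
Hypothesis A_pos : 0 < A.
Hypothesis B_pos : 0 < B.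

Lemma share_denom_pos x : 0 <= x <= 1 -> 0 < A * x + B * (1 - x).
Proof. intros Hx. destruct (Rle_or_lt x (1 / 2)); nra. Qed.

Lemma share_0 : share A B 0 = 0.
Proof. unfold share, Rdiv. ring. Qed.

Lemma share_1 : share A B 1 = 1.
Proof. unfold share. field_simplify; [reflexivity|lra]. Qed.

Lemma share_le x y : 0 <= x -> x <= y -> y <= 1 -> share A B x <= share A B y.
Proof.
  intros H0x Hxy Hy1. unfold share.
  pose proof (share_denom_pos x ltac:(lra)). pose proof (share_denom_pos y ltac:(lra)).
  assert (Hdiff : A * y / (A * y + B * (1 - y)) - A * x / (A * x + B * (1 - x))
                 = A * B * (y - x) / ((A * x + B * (1 - x)) * (A * y + B * (1 - y))))
    by (field; lra).
  enough (0 <= A * B * (y - x) / ((A * x + B * (1 - x)) * (A * y + B * (1 - y)))) by lra.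
  unfold Rdiv. apply Rmult_le_pos; [apply Rmult_le_pos; nra | left; apply Rinv_0_lt_compat; nra].
Qed.

Lemma share_bounds x : 0 <= x <= 1 -> 0 <= share A B x <= 1.
Proof.
  intros Hx. rewrite <- share_0, <- share_1 at 1. split; apply share_le; lra.
Qed.

Lemma share_sub x : 0 <= x <= 1 ->
  share A B x - x = (A - B) * (x * (1 - x)) / (A * x + B * (1 - x)).
Proof. intros Hx. pose proof (share_denom_pos x Hx). unfold share. field. lra. Qed.

Lemma share_gt x : B < A -> 0 < x < 1 -> x < share A B x.
Proof.
  intros HBA Hx. enough (0 < share A B x - x) by lra. rewrite share_sub by lra.
  apply Rdiv_lt_0_compat; [apply Rmult_lt_0_compat; nra | apply share_denom_pos; lra].
Qed.

Lemma share_lt x : A < B -> 0 < x < 1 -> share A B x < x.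
Proof.
  intros HAB Hx. enough (0 < x - share A B x) by lra.
  replace (x - share A B x) with ((B - A) * (x * (1 - x)) / (A * x + B * (1 - x)))
    by (rewrite <- (Ropp_minus_distr (share A B x)), share_sub by lra; field;
        pose proof (share_denom_pos x ltac:(lra)); lra).
  apply Rdiv_lt_0_compat; [apply Rmult_lt_0_compat; nra | apply share_denom_pos; lra].
Qed.

End Share.

Lemma share_share A B C D x : 0 < A -> 0 < B -> 0 < C -> 0 < D -> 0 <= x <= 1 ->
  share A B (share C D x) = share (A * C) (B * D) x.
Proof.
  intros HA HB HC HD Hx. pose proof (share_denom_pos C D HC HD x Hx).
  pose proof (share_denom_pos (A * C) (B * D) ltac:(nra) ltac:(nra) x Hx).
  unfold share. field. split; [nra | lra].
Qed.

Lemma share_inv A B x : 0 < A -> 0 < B -> 0 <= x <= 1 -> share B A (share A B x) = x.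
Proof.
  intros HA HB Hx. rewrite share_share by assumption. rewrite Rmult_comm.
  unfold share. field. nra.
Qed.

(* [T] and [T'] are conjugate through [share A B], which moves every interior point up
   (and [a] to the starting point of [T']); equilibria reached by [T'] cannot lie above
   those reached by [T]. *)
Lemma equilibrium_le_of_conjugate (T T' : R -> R) (A B a s s' : R) :
  0 < B < A -> 0 < a < 1 ->
  (forall x y, 0 <= x -> x <= y -> y <= 1 -> T x <= T y) ->
  (forall x y, 0 <= x -> x <= y -> y <= 1 -> T' x <= T' y) ->
  (forall x, 0 <= x <= 1 -> T' (share A B x) = T x) ->
  reaches_equilibrium (fun x => T x - x) a s ->
  reaches_equilibrium (fun x => T' x - x) (share A B a) s' ->
  s' <= s.
Proof.
  intros HBA Ha HT HT' Hconj [Hs [Hfs [Hup Hdown]]] [Hs' [Hfs' [Hup' Hdown']]].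
  cbv beta in Hfs, Hup, Hdown, Hfs', Hup', Hdown'.
  set (a' := share A B a) in *.
  assert (Haa' : a < a') by (apply share_gt; lra).
  assert (Ha'1 : a' <= 1) by (apply (share_bounds A B); lra).
  destruct (Rle_or_lt s' s) as [|Hss']; [assumption|exfalso].
  destruct (Rle_or_lt a s) as [Has|Has].
  - set (c := share A B s).
    assert (Hsc : s < c) by (apply share_gt; lra).
    assert (Hc1 : c <= 1) by (apply (share_bounds A B); lra).
    assert (HT'c : T' c = s) by (unfold c; rewrite Hconj; lra).
    assert (Ha'c : a' <= c) by (apply share_le; lra).
    assert (Hcs' : c < s').
    { destruct (Rle_or_lt s' c) as [Hs'c|]; [exfalso|assumption].
      assert (T' s' <= T' c) by (apply HT'; lra). lra. }
    specialize (Hup' c ltac:(lra)). lra.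
  - destruct (Rle_or_lt a' s') as [Has'|Has'].
    + assert (Ha'up : a' <= T' a').
      { destruct (Req_dec a' s') as [->|]; [lra|]. specialize (Hup' a' ltac:(lra)). lra. }
      assert (T' a' = T a) by (apply Hconj; lra).
      specialize (Hdown a ltac:(lra)). lra.
    + set (c := share B A s').
      assert (Hc : share A B c = s') by (apply share_inv; lra).
      assert (Hc01 : 0 <= c <= 1) by (apply share_bounds; lra).
      assert (Hcs' : c < s') by (apply share_lt; lra).
      assert (HTc : T c = s') by (rewrite <- Hconj, Hc; lra).
      assert (Hca : c <= a).
      { assert (Hinv : share B A a' = a) by (apply share_inv; lra).
        rewrite <- Hinv. apply share_le; lra. }
      assert (Hsc : s < c).
      { destruct (Rle_or_lt c s) as [Hcs|]; [exfalso|assumption].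
        assert (T c <= T s) by (apply HT; lra). lra. }
      specialize (Hdown c ltac:(lra)). lra.
Qed.

(* [theta1] with [l] of the [m] sites correct; [k0], [k1], [k2] are the masses of the
   searchers for whom both signals, only [x_n], and only [z_n] point to the correct sites. *)
Definition theta_form (k0 k1 k2 g l m x : R) : R :=
  k0 + k1 * share (g / l) ((1 - g) / (m - l)) x
     + k2 * share ((1 - g) / l) (g / (m - l)) x.

Lemma theta1_theta_form M L p mu g :
  theta1 M L p mu g =
  if (2 * L <=? M - 1)%nat
  then theta_form (p * (1 - mu)) (p * mu) ((1 - p) * (1 - mu)) g (INR L) (INR M)
  else theta_form (p * mu) (p * (1 - mu)) ((1 - p) * mu) g (INR L) (INR M).
Proof.
  assert (Hshare : forall c A B l k x,
    c * A * (x / l) / (A * (x / l) + B * ((1 - x) / k)) = c * share (A / l) (B / k) x).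
  { intros. unfold share.
    replace (A * (x / l) + B * ((1 - x) / k)) with (A / l * x + B / k * (1 - x))
      by (unfold Rdiv; ring).
    unfold Rdiv; ring. }
  apply functional_extensionality. intros x. unfold theta1, theta_form. cbv zeta.
  destruct (2 * L <=? M - 1)%nat; rewrite !Hshare; reflexivity.
Qed.

Section ThetaForm.

Variables k0 k1 k2 g l m : R.
Hypothesis k1_nonneg : 0 <= k1.
Hypothesis k2_nonneg : 0 <= k2.
Hypothesis g_range : 0 < g < 1.
Hypothesis l_pos : 0 < l.
Hypothesis l_lt_m : l < m.

Let weights_pos :
  0 < g / l /\ 0 < (1 - g) / (m - l) /\ 0 < (1 - g) / l /\ 0 < g / (m - l).
Proof. repeat split; apply Rdiv_lt_0_compat; lra. Qed.

Lemma theta_form_le x y : 0 <= x -> x <= y -> y <= 1 ->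
  theta_form k0 k1 k2 g l m x <= theta_form k0 k1 k2 g l m y.
Proof.
  intros H0x Hxy Hy1. destruct weights_pos as [HA1 [HB1 [HA2 HB2]]]. unfold theta_form.
  assert (share (g / l) ((1 - g) / (m - l)) x <= share (g / l) ((1 - g) / (m - l)) y)
    by (apply share_le; assumption).
  assert (share ((1 - g) / l) (g / (m - l)) x <= share ((1 - g) / l) (g / (m - l)) y)
    by (apply share_le; assumption).
  nra.
Qed.

Lemma theta_form_0 : theta_form k0 k1 k2 g l m 0 = k0.
Proof. unfold theta_form. rewrite !share_0. ring. Qed.

Lemma theta_form_1 : theta_form k0 k1 k2 g l m 1 = k0 + k1 + k2.
Proof.
  destruct weights_pos as [HA1 [HB1 [HA2 HB2]]].
  unfold theta_form. rewrite !share_1 by assumption. ring.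
Qed.

Lemma theta_form_derivable x : 0 <= x <= 1 ->
  derivable_pt (fun y => theta_form k0 k1 k2 g l m y - y) x.
Proof.
  intros Hx. destruct weights_pos as [HA1 [HB1 [HA2 HB2]]].
  pose proof (share_denom_pos _ _ HA1 HB1 x Hx). pose proof (share_denom_pos _ _ HA2 HB2 x Hx).
  unfold theta_form, share. reg; lra.
Qed.

End ThetaForm.

Lemma theta_form_shift k0 k1 k2 g l m x : 0 < g < 1 -> 0 < l -> l + 1 < m -> 0 <= x <= 1 ->
  theta_form k0 k1 k2 g (l + 1) m (share ((l + 1) / l) ((m - l - 1) / (m - l)) x)
  = theta_form k0 k1 k2 g l m x.
Proof.
  intros Hg Hl Hlm Hx.
  assert (HA : 0 < (l + 1) / l) by (apply Rdiv_lt_0_compat; lra).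
  assert (HB : 0 < (m - l - 1) / (m - l)) by (apply Rdiv_lt_0_compat; lra).
  unfold theta_form. rewrite !share_share by (try apply Rdiv_lt_0_compat; lra).
  replace (g / (l + 1) * ((l + 1) / l)) with (g / l) by (field; lra).
  replace ((1 - g) / (m - (l + 1)) * ((m - l - 1) / (m - l))) with ((1 - g) / (m - l))
    by (field; lra).
  replace ((1 - g) / (l + 1) * ((l + 1) / l)) with ((1 - g) / l) by (field; lra).
  replace (g / (m - (l + 1)) * ((m - l - 1) / (m - l))) with (g / (m - l)) by (field; lra).
  reflexivity.
Qed.

Lemma share_shift_start l m : 0 < l -> l + 1 < m ->
  share ((l + 1) / l) ((m - l - 1) / (m - l)) (l / m) = (l + 1) / m.
Proof. intros Hl Hlm. unfold share. field. lra. Qed.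

Lemma theta_form_equilibrium_le k0 k1 k2 g l m s s' :
  0 <= k1 -> 0 <= k2 -> 0 < g < 1 -> 0 < l -> l + 1 < m ->
  reaches_equilibrium (fun x => theta_form k0 k1 k2 g l m x - x) (l / m) s ->
  reaches_equilibrium (fun x => theta_form k0 k1 k2 g (l + 1) m x - x) ((l + 1) / m) s' ->
  s' <= s.
Proof.
  intros Hk1 Hk2 Hg Hl Hlm Hs Hs'.
  rewrite <- share_shift_start in Hs' by assumption.
  assert (HA : (l + 1) / l = 1 + / l) by (field; lra).
  assert (HB : (m - l - 1) / (m - l) = 1 - / (m - l)) by (field; lra).
  assert (Ha : l / m * m = l) by (field; lra).
  pose proof (Rinv_0_lt_compat l Hl). pose proof (Rinv_0_lt_compat (m - l) ltac:(lra)).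
  apply (equilibrium_le_of_conjugate (theta_form k0 k1 k2 g l m)
           (theta_form k0 k1 k2 g (l + 1) m) ((l + 1) / l) ((m - l - 1) / (m - l)) (l / m));
    try assumption.
  - split; [apply Rdiv_lt_0_compat|]; lra.
  - split; [apply Rdiv_lt_0_compat | ]; nra.
  - intros x y; apply theta_form_le; lra.
  - intros x y; apply theta_form_le; lra.
  - intros x Hx; apply theta_form_shift; lra.
Qed.

Lemma limit_efficiency_reaches_equilibrium M L p mu g X s :
  (1 <= L < M)%nat -> 0 <= p <= 1 -> 0 <= mu <= 1 -> 0 < g < 1 ->
  solves_limit_ode M L p mu g X -> tends_at_infty X s ->
  reaches_equilibrium (fun x => theta1 M L p mu g x - x) (INR L / INR M) s.
Proof.
  intros HL Hp Hmu Hg [HX0 [HXrc HX]] Hlim.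
  assert (Hl : 1 <= INR L) by (apply (le_INR 1); lia).
  assert (HLM : INR L + 1 <= INR M) by (rewrite <- S_INR; apply le_INR; lia).
  rewrite <- HX0. apply ode_reaches_equilibrium; [| exact HX | | | | | exact Hlim].
  - intros eps Heps. destruct (HXrc eps Heps) as [del [Hdel Hnear]].
    exists del; split; [exact Hdel|]. intros t Ht. apply Hnear. lra.
  - rewrite theta1_theta_form.
    destruct (2 * L <=? M - 1)%nat; intros x Hx; apply theta_form_derivable; nra.
  - rewrite HX0. assert (INR L / INR M * INR M = INR L) by (field; lra). nra.
  - rewrite theta1_theta_form.
    destruct (2 * L <=? M - 1)%nat; rewrite theta_form_0; nra.
  - rewrite theta1_theta_form.
    destruct (2 * L <=? M - 1)%nat; rewrite theta_form_1; nra.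
Qed.

Lemma limit_efficiency_equilibrium_le M L p mu g s s' :
  (1 <= L)%nat -> (L + 2 <= M)%nat ->
  (2 * L <=? M - 1)%nat = (2 * S L <=? M - 1)%nat ->
  0 <= p <= 1 -> 0 <= mu <= 1 -> 0 < g < 1 ->
  reaches_equilibrium (fun x => theta1 M L p mu g x - x) (INR L / INR M) s ->
  reaches_equilibrium (fun x => theta1 M (S L) p mu g x - x) (INR (S L) / INR M) s' ->
  s' <= s.
Proof.
  intros HL HLM Hminority Hp Hmu Hg Hs Hs'.
  assert (Hl : 1 <= INR L) by (apply (le_INR 1); lia).
  assert (Hlm : INR (L + 2) <= INR M) by (apply le_INR; lia).
  rewrite plus_INR in Hlm. simpl in Hlm.
  rewrite theta1_theta_form in Hs, Hs'. rewrite <- Hminority, S_INR in Hs'.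
  destruct (2 * L <=? M - 1)%nat;
    refine (theta_form_equilibrium_le _ _ _ g (INR L) (INR M) s s' _ _ _ _ _ Hs Hs'); nra.
Qed.

Lemma odd_pred_half M : Nat.odd M = true -> ((M - 1) / 2 * 2)%nat = (M - 1)%nat.
Proof.
  intros Hodd. apply Nat.odd_spec in Hodd. destruct Hodd as [n ->].
  replace (2 * n + 1 - 1)%nat with (n * 2)%nat by lia. rewrite Nat.div_mul; lia.
Qed.

Lemma minority_succ M L : Nat.odd M = true -> L <> ((M - 1) / 2)%nat ->
  (2 * L <=? M - 1)%nat = (2 * S L <=? M - 1)%nat.
Proof.
  intros Hodd HL. pose proof (odd_pred_half M Hodd).
  destruct (Nat.leb_spec (2 * L) (M - 1)), (Nat.leb_spec (2 * S L) (M - 1)); auto; lia.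
Qed.

Theorem proposition1 (M : nat) (p q mu gamma : R) (P : nat -> R) :
  (3 <= M)%nat -> Nat.odd M = true ->
  1/2 < p < 1 -> 1/2 < q < 1 -> 1/2 < mu <= 1 -> mu * q > p ->
  0 < gamma < 1 ->
  is_limit_efficiency M p mu gamma P ->
  forall j : nat, (1 <= j <= M - 2)%nat -> j <> ((M - 1) / 2)%nat ->
    Qcorr P (S j) <= Qcorr P j /\ Qinc M P (S j) <= Qinc M P j.
Proof.
  intros HM Hodd Hp Hq Hmu Hmq Hg [_ [_ HPL]] j Hj Hjn.
  assert (Hstep : forall L, (1 <= L)%nat -> (L + 2 <= M)%nat -> L <> ((M - 1) / 2)%nat ->
                    P (S L) <= P L).
  { intros L HL HLM HLn.
    destruct (HPL L ltac:(lia)) as [X [HX HXlim]].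
    destruct (HPL (S L) ltac:(lia)) as [Y [HY HYlim]].
    pose proof (limit_efficiency_reaches_equilibrium M L p mu gamma X (P L)
                  ltac:(lia) ltac:(lra) ltac:(lra) Hg HX HXlim) as HeqL.
    pose proof (limit_efficiency_reaches_equilibrium M (S L) p mu gamma Y (P (S L))
                  ltac:(lia) ltac:(lra) ltac:(lra) Hg HY HYlim) as HeqSL.
    exact (limit_efficiency_equilibrium_le M L p mu gamma _ _ HL HLM
             (minority_succ M L Hodd HLn) ltac:(lra) ltac:(lra) Hg HeqL HeqSL). }
  pose proof (odd_pred_half M Hodd).
  unfold Qcorr, Qinc. split; [apply Hstep; lia|].
  replace (M - j)%nat with (S (M - S j)) by lia.
  enough (P (S (M - S j)) <= P (M - S j)%nat) by lra.
  apply Hstep; lia.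
Qed.
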